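(* Let $\lambda>0$, let $n\ge 1$, and let $h:\mathbb{R}\to\mathbb{R}\cup\{+\infty\}$ be proper, closed and convex, such that $0\in\mathrm{dom}(h)$, $h(0)=0$, and $0$ is an accumulation point of $\mathrm{dom}(h)$. Let $\nu=(\mathcal{S}_0,\mathcal{S}_1,\mathcal{S}_\bullet)$ be a partition of $\{1,\dots,n\}$ and define $g^\nu:\mathbb{R}^n\to\mathbb{R}\cup\{+\infty\}$ by $$g^\nu(\mathbf{x})=\lambda\|\mathbf{x}\|_0+\sum_{i=1}^n h(x_i)+\eta(\mathbf{x}\in\mathcal{X}^\nu).$$ Then the convex conjugate $(g^\nu)^*$ is separable, i.e. $(g^\nu)^*(\mathbf{v})=\sum_{i=1}^n (g^\nu_i)^*(v_i)$, where for every $v\in\mathbb{R}$ $$(g^\nu_i)^*(v)=\begin{cases}0 & \text{if } i\in\mathcal{S}_0,\\ h^*(v)-\lambda & \text{if } i\in\mathcal{S}_1,\\ \max\big(h^*(v)-\lambda,0\big) & \text{if } i\in\mathcal{S}_\bullet.\end{cases}$$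
   Context: $\|\mathbf{x}\|_0$ denotes the number of nonzero entries of $\mathbf{x}$. $\eta(\cdot)$ is the convex indicator: $\eta(\text{condition})=0$ if the condition holds and $+\infty$ otherwise. For a partition $\nu=(\mathcal{S}_0,\mathcal{S}_1,\mathcal{S}_\bullet)$ of $\{1,\dots,n\}$, the region is $\mathcal{X}^\nu=\{\mathbf{x}\in\mathbb{R}^n: x_i=0\ \forall i\in\mathcal{S}_0,\ x_i\neq 0\ \forall i\in\mathcal{S}_1\}$ (entries indexed by $\mathcal{S}_\bullet$ are free). $h^*$ denotes the convex conjugate $h^*(v)=\sup_{x\in\mathbb{R}} vx-h(x)$. A point $0$ is an accumulation point of a set $\mathcal{C}\subseteq\mathbb{R}$ if every neighborhood of $0$ contains a point of $\mathcal{C}$ other than $0$. *)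

From HB Require Import structures.
From mathcomp Require Import all_boot all_order all_algebra.
From mathcomp Require Import all_classical all_reals all_analysis.
Set Implicit Arguments. Unset Strict Implicit. Unset Printing Implicit Defensive.
Import Order.TTheory GRing.Theory Num.Theory.
Import numFieldNormedType.Exports.
Local Open Scope classical_set_scope.
Local Open Scope ring_scope.
Local Open Scope ereal_scope.

Section defs.
Variable R : realType.

Definition edom (h : R -> \bar R) : set R := [set x | h x < +oo].

Definition proper_fun (h : R -> \bar R) : Prop :=
  (forall x, h x != -oo) /\ exists x, h x < +oo.

Definition closed_fun (h : R -> \bar R) : Prop :=
  closed [set p : R * R | h p.1 <= p.2%:E].

(* convex (for proper functions, values in R \cup {+oo}) *)
Definition convex_efun (h : R -> \bar R) : Prop :=
  forall (x y t : R), (0 < t < 1)%R ->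
    h (t * x + (1 - t) * y)%R <= t%:E * h x + (1 - t)%:E * h y.

Definition accum_at0 (C : set R) : Prop :=
  forall U : set R, nbhs (0%R : R) U -> exists y, [/\ U y, y != (0%R : R) & C y].

Definition conj1 (h : R -> \bar R) (v : R) : \bar R :=
  ereal_sup [set (v * x)%:E - h x | x in [set: R]].

Definition conjn (n : nat) (g : ('I_n -> R) -> \bar R) (v : 'I_n -> R) : \bar R :=
  ereal_sup [set (\sum_(i < n) v i * x i)%R%:E - g x | x in [set: 'I_n -> R]].

Definition l0norm (n : nat) (x : 'I_n -> R) : nat := #|[set i : 'I_n | x i != (0%R : R)]|%N.

Definition in_region (n : nat) (S0 S1 : {set 'I_n}) (x : 'I_n -> R) : Prop :=
  (forall i, i \in S0 -> x i = (0%R : R)) /\ (forall i, i \in S1 -> x i != (0%R : R)).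

Definition eta_ind (P : Prop) : \bar R := if `[< P >] then 0 else +oo.

Definition g_nu (lam : R) (h : R -> \bar R) (n : nat) (S0 S1 : {set 'I_n})
    (x : 'I_n -> R) : \bar R :=
  (lam * (l0norm x)%:R)%R%:E + \sum_(i < n) h (x i) + eta_ind (in_region S0 S1 x).

Definition g_nu_i_conj (lam : R) (h : R -> \bar R) (n : nat)
    (S0 S1 Sb : {set 'I_n}) (i : 'I_n) (v : R) : \bar R :=
  if i \in S0 then 0
  else if i \in S1 then conj1 h v - lam%:E
  else maxe (conj1 h v - lam%:E) 0.

Definition partition3 (n : nat) (S0 S1 Sb : {set 'I_n}) : Prop :=
  [/\ S0 :&: S1 = finset.set0, S0 :&: Sb = finset.set0, S1 :&: Sb = finset.set0
    & S0 :|: S1 :|: Sb = finset.setT].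

End defs.

From HB Require Import structures.
From mathcomp Require Import all_boot all_order all_algebra.
From mathcomp Require Import all_classical all_reals all_analysis.
From mathcomp Require Import lra.
Import Order.TTheory GRing.Theory Num.Theory.
Import numFieldNormedType.Exports.
Local Open Scope classical_set_scope.
Local Open Scope ring_scope.
Local Open Scope ereal_scope.

(* g^nu is separable: g^nu(x) = sum_i g^nu_i(x_i) with
   g^nu_i(t) = lam [t <> 0] + h(t) + eta(constraint on coordinate i), and none of
   the g^nu_i takes the value -oo, so the supremum defining (g^nu)^* splits into
   the sum of the one-dimensional suprema (g^nu_i)^*.  Each of those is the max of
   the value at t = 0 (0, or -oo if i is in S1) and the supremum over t <> 0
   (h^*(v) - lam, or -oo if i is in S0).  Removing 0 does not change h^*(v): 0 is
   an accumulation point of dom h, so there is y <> 0 with h(y) finite, and by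
   convexity h(t y) <= t h(y) for t in (0,1), so the supremum over t <> 0 is at
   least t (v y - h(y)) for every such t, hence at least 0 = v 0 - h(0). *)

Section ereal_sup_arith.
Context {R : realType}.
Implicit Types (A B : set (\bar R)) (x y : \bar R).

Lemma ereal_sup_setU A B : ereal_sup (A `|` B) = maxe (ereal_sup A) (ereal_sup B).
Proof.
apply/eqP; rewrite eq_le ge_max !ereal_sup_le ?subsetUl ?subsetUr// !andbT.
apply/ereal_supP => y [Ay|By]; rewrite le_max.
  by rewrite ereal_sup_ubound.
by rewrite orbC ereal_sup_ubound.
Qed.

Lemma ereal_sup_range_split {T : Type} (f : T -> \bar R) (a : T) :
  ereal_sup (range f) = maxe (f a) (ereal_sup (f @` [set~ a])).
Proof. by rewrite -(setUv [set a]) image_setU image_set1 ereal_sup_setU ereal_sup1. Qed.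

Lemma ereal_supDr A (c : R) :
  ereal_sup [set a + c%:E | a in A] = ereal_sup A + c%:E.
Proof.
gen have supDr_le : c A / ereal_sup [set a + c%:E | a in A] <= ereal_sup A + c%:E.
  by apply/ereal_supP => _ [a Aa <-]; apply: leeD2r; exact: ereal_sup_ubound.
apply/eqP; rewrite eq_le supDr_le /=.
have A_shift : [set a' + (- c)%:E | a' in [set a + c%:E | a in A]] = A.
  by rewrite image_comp; under eq_imagel do rewrite /= EFinN addeK//; rewrite image_id.
by have := supDr_le (- c)%R [set a + c%:E | a in A]; rewrite A_shift EFinN leeBrDl// addeC.
Qed.

Lemma ereal_supDl_le B x y : -oo < ereal_sup B ->
  (forall b, B b -> x + b <= y) -> x + ereal_sup B <= y.
Proof.
move=> supB_gtNy xB_le; case: x xB_le => [r| |] xB_le.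
- rewrite addeC -ereal_supDr; apply/ereal_supP => _ [b Bb <-].
  by rewrite addeC; exact: xB_le.
- have [b Bb b_gtNy] := ereal_sup_gtP supB_gtNy.
  by have := xB_le b Bb; rewrite !addye// -ltNye.
- by rewrite addNye leNye.
Qed.

Lemma ereal_supD A B : -oo < ereal_sup A -> -oo < ereal_sup B ->
  ereal_sup [set a + b | a in A & b in B] = ereal_sup A + ereal_sup B.
Proof.
move=> supA_gtNy supB_gtNy; apply/eqP; rewrite eq_le; apply/andP; split.
  apply/ereal_supP => _ [a Aa [b Bb <-]].
  by apply: leeD; exact: ereal_sup_ubound.
rewrite addeC; apply: ereal_supDl_le => // a Aa.
rewrite addeC; apply: ereal_supDl_le => // b Bb.
by apply: ereal_sup_ubound; exists a => //; exists b.
Qed.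

Lemma ereal_sup_sum_separable {T : Type} {n : nat} (F : 'I_n -> T -> \bar R) :
  (forall i, -oo < ereal_sup (range (F i))) ->
  ereal_sup [set \sum_(i < n) F i (x i) | x in [set: 'I_n -> T]]
  = \sum_(i < n) ereal_sup (range (F i)).
Proof.
elim: n F => [F _|n IH F supF_gtNy].
  have x0 : 'I_0 -> T by case.
  rewrite big_ord0 -[RHS]ereal_sup1; congr ereal_sup; apply/seteqP; split.
    by move=> _ [x _ <-]; rewrite big_ord0.
  by move=> _ ->; exists x0 => //; rewrite big_ord0.
pose G i := F (widen_ord (leqnSn n) i).
have sumG_gtNy : -oo < \sum_(i < n) ereal_sup (range (G i)).
  by rewrite ltNye esum_eqNy; apply/existsPn => i; rewrite -ltNye supF_gtNy.
have supG := IH G (fun i => supF_gtNy _).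
rewrite big_ord_recr /= -supG -ereal_supD ?supG //.
congr (ereal_sup _).
apply/seteqP; split => [_ [x _ <-]|_ [_ [y _ <-] [_ [t _ <-] <-]]].
  rewrite big_ord_recr /=; exists (\sum_(i < n) G i (x (widen_ord (leqnSn n) i))).
    by exists (fun i => x (widen_ord (leqnSn n) i)).
  by exists (F ord_max (x ord_max)) => //; exists (x ord_max).
exists (fun i => if unlift ord_max i is Some j then y j else t) => //.
rewrite big_ord_recr /= unlift_none; congr (_ + _); apply: eq_bigr => i _; rewrite /G.
have -> : widen_ord (leqnSn n) i = lift ord_max i by apply: val_inj; rewrite [RHS]lift_max.
by rewrite liftK.
Qed.

End ereal_sup_arith.

Section conjugate_on_R.
Context {R : realType} (h : R -> \bar R).
Hypothesis h0 : h 0%R = 0.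

Lemma conj1_ge0 w : 0 <= conj1 h w.
Proof. by apply: ereal_sup_ubound; exists 0%R => //; rewrite mulr0 h0 sube0. Qed.

Hypothesis hNy : forall x, h x != -oo.
Hypothesis hconv : convex_efun h.
Hypothesis hacc : accum_at0 (edom h).

Lemma conj1_punctured_ge0 w :
  0 <= ereal_sup [set (w * t)%:E - h t | t in [set~ 0%R]].
Proof.
set S := ereal_sup _.
have [y [_ y_neq0 hy_lty]] := hacc setT filterT.
have hy_fin : h y \is a fin_num by rewrite fin_numE hNy -ltey.
set c := (w * y - fine (h y))%R.
have scaled_le t : (0 < t < 1)%R -> (t * c)%:E <= S.
  move=> t01; apply: le_ereal_sup_tmp.
  exists ((w * (t * y))%:E - h (t * y)%R).
    exists (t * y)%R => //; apply/eqP; rewrite mulf_neq0 // gt_eqF //.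
    by case/andP: t01.
  have := hconv y 0%R t t01; rewrite mulr0 addr0 h0 mule0 adde0.
  rewrite -(fineK hy_fin) -EFinM => hty.
  by rewrite /c mulrBr mulrCA EFinB; apply: leeB.
apply/lee_subgt0Pr => e e_gt0; rewrite sub0e -EFinN.
have [t t01 tc_ge] : exists2 t, (0 < t < 1)%R & (- e <= t * c)%R.
  have abs_c_ge0 := normr_ge0 c.
  have c_ge : (- `|c| <= c)%R by rewrite lerNl -normrN ler_norm.
  pose t := (e / (e + `|c| + 1))%R.
  have td : (t * (e + `|c| + 1) = e)%R by rewrite divfK // gt_eqF //; lra.
  have t_gt0 : (0 < t)%R by rewrite divr_gt0 //; lra.
  by exists t; [apply/andP; split => //|]; nra.
by apply: le_trans (scaled_le t t01); rewrite lee_fin.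
Qed.

Lemma conj1_punctured w :
  ereal_sup [set (w * t)%:E - h t | t in [set~ 0%R]] = conj1 h w.
Proof.
by rewrite /conj1 (ereal_sup_range_split _ 0%R) /= mulr0 h0 sube0 max_r ?conj1_punctured_ge0.
Qed.

End conjugate_on_R.

Section separable_conjugate.
Context {R : realType}.

Lemma conjn_separable n (g : 'I_n -> R -> \bar R) (v : 'I_n -> R) :
  (forall i t, g i t != -oo) -> (forall i, -oo < conj1 (g i) (v i)) ->
  conjn (fun x => \sum_(i < n) g i (x i)) v = \sum_(i < n) conj1 (g i) (v i).
Proof.
move=> gNy conj_gtNy.
rewrite -(ereal_sup_sum_separable (fun i t => (v i * t)%:E - g i t)) //.
congr (ereal_sup _); apply: eq_imagel => x _.
rewrite -sumEFin -sumeN ?big_split // => i j _ _.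
by apply: ltninfty_adde_def; rewrite inE ltNye.
Qed.

Lemma eta_ind_forall (I : finType) (P : I -> Prop) :
  eta_ind R (forall i, P i) = \sum_i eta_ind R (P i).
Proof.
have [allP|] := pselect (forall i, P i).
  by rewrite /eta_ind asboolT // big1 // => i _; rewrite asboolT.
move=> /existsNP[j notPj]; rewrite /eta_ind asboolF // (bigD1 j) //= asboolF //.
rewrite addye // esum_eqNy; apply/existsPn => i; apply/negP => /andP[_].
by case: asboolP.
Qed.

End separable_conjugate.

Definition g_nu_i {R : realType} (lam : R) (h : R -> \bar R) {n : nat}
    (S0 S1 : {set 'I_n}) (i : 'I_n) (t : R) : \bar R :=
  (lam * (t != 0%R)%:R)%:E + h t
  + eta_ind R ((i \in S0 -> t = 0%R) /\ (i \in S1 -> t != 0%R)).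

Section coordinate_conjugate.
Context {R : realType} (lam : R) (h : R -> \bar R) (n : nat) (S0 S1 : {set 'I_n}).

Lemma l0norm_sum (x : 'I_n -> R) :
  ((l0norm x)%:R = \sum_(i < n) (x i != 0)%:R :> R)%R.
Proof.
rewrite /l0norm -sum1_card natr_sum big_mkcond; apply: eq_bigr => i _.
have -> : (i \in [set i0 | x i0 != 0%R]) = (x i != 0%R) by apply/idP/idP; rewrite inE.
by case: (x i != 0%R).
Qed.

Lemma g_nu_separable (x : 'I_n -> R) :
  g_nu lam h S0 S1 x = \sum_(i < n) g_nu_i lam h S0 S1 i (x i).
Proof.
rewrite /g_nu /g_nu_i !big_split /= sumEFin -mulr_sumr -l0norm_sum -eta_ind_forall.
congr (_ + _); congr (eta_ind R _); apply/propext.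
split=> [[x_S0 x_S1] i|x_coord]; first by split; [exact: x_S0|exact: x_S1].
by split=> i; [exact: (x_coord i).1|exact: (x_coord i).2].
Qed.

Hypothesis h0 : h 0%R = 0.
Hypothesis hNy : forall x, h x != -oo.

Lemma g_nu_i_neqNy i t : g_nu_i lam h S0 S1 i t != -oo.
Proof.
by rewrite /g_nu_i /eta_ind !adde_eq_ninfty (negbTE (hNy t)) /=; case: asboolP.
Qed.

Lemma g_nu_i_at0 i : g_nu_i lam h S0 S1 i 0%R = if i \in S1 then +oo else 0.
Proof.
rewrite /g_nu_i eqxx mulr0 h0 !add0e /eta_ind.
have [iS1|iS1] := boolP (i \in S1); last by rewrite asboolT.
by rewrite asboolF // => -[_ /(_ isT)].
Qed.

Lemma g_nu_i_neq0 i t : t != 0%R ->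
  g_nu_i lam h S0 S1 i t = if i \in S0 then +oo else lam%:E + h t.
Proof.
move=> t_neq0; rewrite /g_nu_i t_neq0 mulr1 /eta_ind.
have [iS0|iS0] := boolP (i \in S0); last by rewrite asboolT ?adde0.
rewrite asboolF ?addey // ?adde_eq_ninfty ?(negbTE (hNy t)) //.
by move=> -[/(_ isT) /eqP]; rewrite (negbTE t_neq0).
Qed.

Lemma g_nu_i_conj_gtNy Sb i w : -oo < g_nu_i_conj lam h S0 S1 Sb i w.
Proof.
have conj_lam_gtNy : -oo < conj1 h w - lam%:E.
  rewrite ltNye adde_eq_ninfty negb_or -ltNye.
  by rewrite (lt_le_trans ltNy0 (conj1_ge0 _ h0 w)).
rewrite /g_nu_i_conj; case: ifP => _; first exact: ltNy0.
by case: ifP => _ //; rewrite (lt_le_trans conj_lam_gtNy) // le_max lexx.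
Qed.

Hypothesis hconv : convex_efun h.
Hypothesis hacc : accum_at0 (edom h).

Lemma conj1_g_nu_i_punctured i w :
  ereal_sup [set (w * t)%:E - g_nu_i lam h S0 S1 i t | t in [set~ 0%R]]
  = if i \in S0 then -oo else conj1 h w - lam%:E.
Proof.
have punctured_neq0 t : [set~ 0%R] t -> t != 0%R by move/eqP.
have [iS0|iS0] := boolP (i \in S0).
  rewrite /= -(@ereal_sup_cst R R -oo [set~ 0%R]); last first.
    by apply/set0P; exists 1%R; apply/eqP; exact: oner_neq0.
  congr (ereal_sup _); apply: eq_imagel => t /punctured_neq0 t_neq0.
  by rewrite g_nu_i_neq0 // iS0 addeNy.
rewrite -conj1_punctured // -ereal_supDr image_comp; congr (ereal_sup _).
apply: eq_imagel => t /punctured_neq0 t_neq0.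
by rewrite g_nu_i_neq0 // (negbTE iS0) /= oppeD // addeA addeAC EFinN.
Qed.

Lemma conj1_g_nu_i Sb i w : S0 :&: S1 = finset.set0 ->
  conj1 (g_nu_i lam h S0 S1 i) w = g_nu_i_conj lam h S0 S1 Sb i w.
Proof.
move=> S01; rewrite /conj1 (ereal_sup_range_split _ 0%R) conj1_g_nu_i_punctured /=.
rewrite g_nu_i_at0 mulr0 /g_nu_i_conj.
have [iS0|iS0] := boolP (i \in S0).
  have -> : i \in S1 = false.
    apply/negP => iS1; have : i \in S0 :&: S1 by rewrite inE iS0 iS1.
    by rewrite S01 inE.
  by rewrite sube0 maxeNy.
have [iS1|iS1] := boolP (i \in S1); first by rewrite addeNy maxNye.
by rewrite sube0 maxC.
Qed.

End coordinate_conjugate.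

Theorem proposition3p2 (R : realType) (lam : R) (n : nat) (h : R -> \bar R)
    (S0 S1 Sb : {set 'I_n}) :
  (0 < lam)%R -> (1 <= n)%N ->
  proper_fun h -> closed_fun h -> convex_efun h ->
  edom h 0%R -> h 0%R = 0 -> accum_at0 (edom h) ->
  partition3 S0 S1 Sb ->
  forall v : 'I_n -> R,
    conjn (g_nu lam h S0 S1) v = \sum_(i < n) g_nu_i_conj lam h S0 S1 Sb i (v i).
Proof.
move=> _ _ [hNy _] _ hconv _ h0 hacc [S01 _ _ _] v.
have -> : g_nu lam h S0 S1 = fun x => \sum_(i < n) g_nu_i lam h S0 S1 i (x i).
  by apply/funext => x; exact: g_nu_separable.
have conj_coord i : conj1 (g_nu_i lam h S0 S1 i) (v i) = g_nu_i_conj lam h S0 S1 Sb i (v i).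
  exact: conj1_g_nu_i.
rewrite conjn_separable => [|i t|i]; first by apply: eq_bigr => i _; exact: conj_coord.
  exact: g_nu_i_neqNy.
by rewrite conj_coord; exact: g_nu_i_conj_gtNy.
Qed.
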